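(* For any signed graph $(G,\sigma)$, $\chi_c(G,\sigma)\le 2\chi_c(G)$, where $\chi_c(G)$ is the circular chromatic number of the underlying unsigned graph $G$.
   Context: A signed graph $(G,\sigma)$ is a finite graph $G$ (multiple edges allowed, no loops) with a signature $\sigma:E(G)\to\{+1,-1\}$. For real $r\ge 2$, $C^r$ is the circle of circumference $r$, $d_{C^r}(x,y)=\min\{|x-y|,r-|x-y|\}$, $\overline{x}=x+r/2\pmod r$. A circular $r$-coloring of $(G,\sigma)$ is $f:V(G)\to C^r$ with $d_{C^r}(f(u),f(v))\ge1$ for each positive edge $uv$ and $d_{C^r}(f(u),\overline{f(v)})\ge1$ for each negative edge $uv$; $\chi_c(G,\sigma)$ is the infimum of such $r\ge2$. For an unsigned graph $G$, a circular $r$-coloring requires $d_{C^r}(f(u),f(v))\ge1$ for every edge $uv$, and $\chi_c(G)$ is the infimum of such $r$. *)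

From mathcomp Require Import all_boot all_order all_algebra.
From mathcomp Require Import classical_sets reals.
Set Implicit Arguments. Unset Strict Implicit. Unset Printing Implicit Defensive.
Import Order.TTheory GRing.Theory Num.Theory.
Local Open Scope ring_scope.
Local Open Scope classical_set_scope.

(* A signed (multi)graph: vertex type V, edge type E (finite), each edge e
   has endpoints (ends e).1, (ends e).2 (distinct: no loops, checked by the
   theorem hypothesis), and sign [sigma e] (true = +1, false = -1).
   Parallel edges are allowed since distinct edges may share endpoints. *)

Section Circ.
Variable R : realType.

(* points of the circle C^r are represented by reals in [0, r) *)
Definition onC (r x : R) : Prop := 0 <= x /\ x < r.

Definition dC (r x y : R) : R := Num.min `|x - y| (r - `|x - y|).

Definition antip (r x : R) : R :=
  if x + r / 2 < r then x + r / 2 else x + r / 2 - r.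

Variables (V E : finType) (ends : E -> V * V).

Definition signed_circ_col (sigma : E -> bool) (r : R) (f : V -> R) : Prop :=
  (forall v, onC r (f v)) /\
  (forall e, if sigma e then 1 <= dC r (f (ends e).1) (f (ends e).2)
             else 1 <= dC r (f (ends e).1) (antip r (f (ends e).2))).

Definition circ_col (r : R) (f : V -> R) : Prop :=
  (forall v, onC r (f v)) /\
  (forall e, 1 <= dC r (f (ends e).1) (f (ends e).2)).

Definition chi_c_signed (sigma : E -> bool) : R :=
  inf [set r : R | 2 <= r /\ exists f, signed_circ_col sigma r f].

Definition chi_c : R :=
  inf [set r : R | 2 <= r /\ exists f, circ_col r f].

End Circ.

From mathcomp Require Import all_boot all_order all_algebra.
From mathcomp Require Import classical_sets reals.
From mathcomp Require Import lra.
Import Order.TTheory GRing.Theory Num.Theory.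
Local Open Scope ring_scope.

(* View C^r as half of C^{2r}.  For colours x, y in [0, r), the distance in
   C^{2r} from x to y is |x - y| and the distance from x to the antipode y + r
   of y is r - |x - y|; their minimum is d_{C^r}(x, y).  Hence every circular
   r-colouring of G is a circular 2r-colouring of (G, sigma), whatever the
   signature.  A loopless G has some circular colouring (by vertex index), so
   chi_c(G) is the infimum of a nonempty set and the bound passes to infima. *)

Section HalfCircle.
Context {R : realType} {r x y : R}.
Hypotheses (hx : onC r x) (hy : onC r y).

Lemma antip_double : antip (2 * r) y = y + r.
Proof.
case: hy => y0 yr; rewrite /antip [2 * r]mulrC mulfK ?pnatr_eq0 //.
by have -> : y + r < r * 2 by lra.
Qed.

Lemma dC_double : dC (2 * r) x y = `|x - y|.
Proof.
case: hx hy => x0 xr [y0 yr]; rewrite /dC; apply: min_l.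
suff : `|x - y| < r by lra.
by rewrite ltr_norml; apply/andP; split; lra.
Qed.

Lemma dC_double_antip : dC (2 * r) x (antip (2 * r) y) = r - `|x - y|.
Proof.
case: hx hy => x0 xr [y0 yr]; rewrite antip_double /dC.
rewrite [`|x - (y + r)|]ltr0_norm; last by lra.
have [?|?] := lerP 0 (x - y); [rewrite ger0_norm // | rewrite ltr0_norm //].
- by rewrite min_l; lra.
- by rewrite min_r; lra.
Qed.

Lemma dC_ge1_double : 1 <= dC r x y ->
  1 <= dC (2 * r) x y /\ 1 <= dC (2 * r) x (antip (2 * r) y).
Proof. by rewrite dC_double dC_double_antip /dC le_min => /andP. Qed.

End HalfCircle.

Lemma dC_natr_ge1 (R : realType) (n i j : nat) :
  (i < n)%N -> (j < n)%N -> i != j -> 1 <= dC (n%:R + 2 : R) i%:R j%:R.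
Proof.
wlog ij : i j / (i < j)%N.
  move=> hwlog ilt jlt; rewrite neq_ltn => /orP[ij | ji].
  - by apply: hwlog; rewrite ?ltn_eqF.
  - by rewrite /dC distrC; apply: hwlog; rewrite ?ltn_eqF.
move=> _ jn _.
have ij' : i%:R + 1 <= j%:R :> R by rewrite natr1 ler_nat.
have jn' : j%:R + 1 <= n%:R :> R by rewrite natr1 ler_nat.
have i0 := ler0n R i.
rewrite /dC distrC ger0_norm; last by lra.
by rewrite le_min; apply/andP; split; lra.
Qed.

Section Colourings.
Variables (R : realType) (V E : finType) (ends : E -> V * V).

Lemma circ_col_signed_double (sigma : E -> bool) (r : R) (f : V -> R) :
  circ_col ends r f -> signed_circ_col ends sigma (2 * r) f.
Proof.
move=> [fC fe]; split=> [v | e].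
  by case: (fC v) => ? ?; split; lra.
have [h1 h2] := dC_ge1_double (fC (ends e).1) (fC (ends e).2) (fe e).
by case: (sigma e).
Qed.

Lemma circ_col_enum_rank : (forall e, (ends e).1 != (ends e).2) ->
  circ_col ends (#|V|%:R + 2 : R) (fun v => (enum_rank v : nat)%:R).
Proof.
move=> noloop; split=> [v | e].
  have : (enum_rank v : nat)%:R + 1 <= #|V|%:R :> R by rewrite natr1 ler_nat.
  by have := ler0n R (enum_rank v); split; lra.
apply: dC_natr_ge1; rewrite ?ltn_ord //.
by apply: contra (noloop e) => /eqP /val_inj /enum_rank_inj ->.
Qed.

End Colourings.

Lemma inf_le_mul (R : realType) (k : R) (S T : set R) :
  0 < k -> (S !=set0)%classic -> has_lbound T -> (forall r, S r -> T (k * r)) ->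
  inf T <= k * inf S.
Proof.
move=> k0 S0 Tlb ST; rewrite -ler_pdivrMl //.
by apply: lb_le_inf => // r /ST /(ge_inf Tlb); rewrite ler_pdivrMl.
Qed.

Theorem lemma5 (R : realType) (V E : finType) (ends : E -> V * V)
  (noloop : forall e, (ends e).1 != (ends e).2) (sigma : E -> bool) :
  chi_c_signed R ends sigma <= 2 * chi_c R ends.
Proof.
apply: inf_le_mul => //.
- exists (#|V|%:R + 2); split; first by rewrite lerDr ler0n.
  by exists (fun v => (enum_rank v : nat)%:R); exact: circ_col_enum_rank.
- by exists 2 => r [].
- move=> r [r2 [f fcol]]; split; first lra.
  by exists f; exact: circ_col_signed_double.
Qed.
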